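(* Let $\Gamma_1=(\gamma_1,\gamma_1^\perp)$ and $\Gamma_2=(\gamma_2,\gamma_2^\perp)$ be two circles that lie on a common sphere $k\in\mathbb{P}(\mathcal{L})$ (with $\langle\mathfrak k,\mathfrak p\rangle\ne0$) and are not tangent to each other. Let $\mathfrak{s}_i\in\gamma_i^\perp\cap\mathcal L$, $i=1,2$, be spheres (not point spheres) that intersect $k$ orthogonally, and set $$\mathfrak{a}:=\langle\mathfrak{s}_2,\mathfrak{p}\rangle\mathfrak{s}_1-\langle\mathfrak{s}_1,\mathfrak{p}\rangle\mathfrak{s}_2,\qquad \tilde{\mathfrak{a}}:=\langle\sigma_{\mathfrak p}(\mathfrak{s}_2),\mathfrak{p}\rangle\mathfrak{s}_1-\langle\mathfrak{s}_1,\mathfrak{p}\rangle\sigma_{\mathfrak p}(\mathfrak{s}_2).$$ Then $\sigma_a$ and $\sigma_{\tilde a}$ are M-Lie inversions preserving $k$, each maps the points of $\Gamma_1$ bijectively onto the points of $\Gamma_2$, and they induce the two Ribaucour correspondences between $\Gamma_1$ and $\Gamma_2$: for every point $p_1$ of $\Gamma_1$ and $\sigma\in\{\sigma_a,\sigma_{\tilde a}\}$ there is a circle tangent to $\Gamma_1$ at $p_1$ and tangent to $\Gamma_2$ at $\sigma(p_1)$.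
   Context: Let $\mathbb{R}^{4,2}$ be $\mathbb{R}^6$ with a nondegenerate symmetric bilinear form $\langle\cdot,\cdot\rangle$ of signature $(4,2)$, $\mathcal{L}$ its light cone, $\mathbb{P}(\mathcal{L})$ the set of (oriented) spheres; black-letter vectors denote homogeneous coordinates. Two spheres are in oriented contact iff their coordinates are orthogonal. A point sphere complex $\mathfrak{p}$ with $\langle\mathfrak{p},\mathfrak{p}\rangle=-1$ is fixed; point spheres are elements of $\mathbb{P}(\mathcal{L}\cap\{\mathfrak p\}^\perp)$. A sphere $t$ intersects a sphere $s$ with $\langle\mathfrak s,\mathfrak p\rangle\neq0$ orthogonally iff $\langle\mathfrak{t},\mathfrak{s}+\langle\mathfrak{s},\mathfrak{p}\rangle\mathfrak{p}\rangle=0$. For $\langle\mathfrak a,\mathfrak a\rangle\neq0$ the Lie inversion with respect to $a$ is $\sigma_a(\mathfrak r)=\mathfrak r-\frac{2\langle\mathfrak r,\mathfrak a\rangle}{\langle\mathfrak a,\mathfrak a\rangle}\mathfrak a$; it is an M-Lie inversion if $\langle\mathfrak a,\mathfrak p\rangle=0$ (then it preserves $\mathfrak p$ and is a Möbius transformation). $\sigma_{\mathfrak p}$ reverses orientation of all spheres. A circle is a pair $\Gamma=(\gamma,\gamma^\perp)$ where $\gamma\subset\{\mathfrak{p}\}^\perp$ is a 3-dimensional subspace of signature $(2,1)$; its points are the point spheres in $\gamma$, the spheres containing it are those in $\gamma^\perp\cap\mathcal L$. A circle lies on a sphere $k$ iff $\mathfrak k\in\gamma^\perp$. A Ribaucour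 correspondence between two cospherical circles is a bijection between their points such that corresponding points are points of tangency of a circle tangent to both (the two circles envelop a common circle congruence). *)

From HB Require Import structures.
From mathcomp Require Import all_boot all_order all_algebra.
From mathcomp Require Import reals.
Set Implicit Arguments.
Unset Strict Implicit.
Unset Printing Implicit Defensive.
Import GRing.Theory Num.Theory.
Local Open Scope ring_scope.

(* Lie sphere geometry in R^{4,2}.  Vectors of R^6 are row vectors 'rV[R]_6;
   the bilinear form is <x,y> := x M y^T for a symmetric matrix M of
   signature (4,2). *)
Section LieGeometry.
Variable R : realType.
Variable M : 'M[R]_6.

Definition lform (x y : 'rV[R]_6) : R := (x *m M *m y^T) 0 0.

Definition sig_diag (n k : nat) : 'M[R]_n :=
  diag_mx (\row_(i < n) (if (i < k)%N then 1 else -1 : R)).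

Definition lie_form_42 : Prop :=
  M^T = M /\ exists P : 'M[R]_6, P \in unitmx /\ P^T *m M *m P = sig_diag 6 4.

(* homogeneous coordinates of an element of P(L) *)
Definition light (x : 'rV[R]_6) : Prop := x != 0 /\ lform x x = 0.

Definition lie_inv (a r : 'rV[R]_6) : 'rV[R]_6 :=
  r - (2 * lform r a / lform a a) *: a.

Variable p : 'rV[R]_6.  (* the point sphere complex *)

Definition point_sphere (x : 'rV[R]_6) : Prop := light x /\ lform x p = 0.

Definition M_Lie_inversion (a : 'rV[R]_6) : Prop :=
  lform a a != 0 /\ lform a p = 0.

Definition orth_intersect (t s : 'rV[R]_6) : Prop :=
  lform t (s + lform s p *: p) = 0.

(* A circle: the row space gamma of G is a 3-dimensional subspace of
   {p}^perp on which the form has signature (2,1). *)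
Definition is_circle (G : 'M[R]_(3,6)) : Prop :=
  row_free G /\ G *m M *m p^T = 0 /\
  exists Q : 'M[R]_3, Q \in unitmx /\ Q *m (G *m M *m G^T) *m Q^T = sig_diag 3 2.

Definition circle_point (G : 'M[R]_(3,6)) (x : 'rV[R]_6) : Prop :=
  point_sphere x /\ (x <= G)%MS.

(* y lies in gamma^perp (i.e. the sphere y contains the circle) *)
Definition circle_perp (G : 'M[R]_(3,6)) (y : 'rV[R]_6) : Prop :=
  G *m M *m y^T = 0.

Definition perp_space (x : 'rV[R]_6) : 'M[R]_6 := kermx (M *m x^T).

(* circles G1, G2 are tangent at their common point x: they have the same
   contact element gamma /\ x^perp at x (same point and tangent line) *)
Definition touch_at (G1 G2 : 'M[R]_(3,6)) (x : 'rV[R]_6) : Prop :=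
  circle_point G1 x /\ circle_point G2 x /\
  (G1 :&: perp_space x == G2 :&: perp_space x)%MS.

Definition circles_tangent (G1 G2 : 'M[R]_(3,6)) : Prop :=
  exists x, touch_at G1 G2 x.

Definition ribaucour_inversion (G1 G2 : 'M[R]_(3,6)) (k b : 'rV[R]_6) : Prop :=
  M_Lie_inversion b /\
      (exists l : R, lie_inv b k = l *: k) /\
      (forall x, circle_point G1 x -> circle_point G2 (lie_inv b x)) /\
      (forall x x', circle_point G1 x -> circle_point G1 x' ->
          lie_inv b x = lie_inv b x' -> x = x') /\
      (forall y, circle_point G2 y -> exists x, circle_point G1 x /\ lie_inv b x = y) /\
      (forall x, circle_point G1 x -> ~ circle_point G2 x ->
          exists C : 'M[R]_(3,6),
            is_circle C /\ touch_at C G1 x /\ touch_at C G2 (lie_inv b x)).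

End LieGeometry.

From HB Require Import structures.
From mathcomp Require Import all_boot all_order all_algebra.
From mathcomp Require Import reals.
From mathcomp Require Import ring lra.
Import GRing.Theory Num.Theory.
Local Open Scope ring_scope.
Set Implicit Arguments. Unset Strict Implicit.

(* Put a := <s2,p> s1 - <s1,p> s2 and d := <s1,s2>.  Then a is orthogonal to p
   and k, so sigma_a is a Moebius transformation fixing k, and
   <a,a> = -2 <s1,p><s2,p> d; moreover sigma_a maps s1 and s2 to multiples of
   each other.  Since a circle on k is exactly {p, k, s}^perp for any sphere s
   through it orthogonal to k, sigma_a exchanges Gamma_1 and Gamma_2.  If d
   were 0, a would be a common point of both circles (or 0) and both circles
   would have the same contact element there, contradicting non-tangency.
   For a point x of Gamma_1 off Gamma_2, let g be a unit tangent vector of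
   Gamma_1 at x; the circle spanned by x, g and a is sigma_a-invariant, has the
   contact element <x, g> at x and hence <sigma_a x, sigma_a g> at sigma_a x,
   which are the contact elements of Gamma_1 and Gamma_2 there.  The second
   inversion is the first one for the oppositely oriented sphere sigma_p(s2). *)

Section LieForm.
Variable R : realType.
Variable M : 'M[R]_6.
Hypothesis M_sym : M^T = M.

Local Notation lf := (lform M).

Lemma lformDl x y z : lf (x + y) z = lf x z + lf y z.
Proof. by rewrite /lform !mulmxDl mxE. Qed.

Lemma lformZl c x z : lf (c *: x) z = c * lf x z.
Proof. by rewrite /lform -!scalemxAl mxE. Qed.

Lemma lformDr x y z : lf z (x + y) = lf z x + lf z y.
Proof. by rewrite /lform linearD /= mulmxDr mxE. Qed.

Lemma lformZr c x z : lf z (c *: x) = c * lf z x.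
Proof. by rewrite /lform linearZ /= -scalemxAr mxE. Qed.

Lemma lformNl x z : lf (- x) z = - lf x z.
Proof. by rewrite -scaleN1r lformZl mulN1r. Qed.

Lemma lformNr x z : lf z (- x) = - lf z x.
Proof. by rewrite -scaleN1r lformZr mulN1r. Qed.

Lemma lformBl x y z : lf (x - y) z = lf x z - lf y z.
Proof. by rewrite lformDl lformNl. Qed.

Lemma lformBr x y z : lf z (x - y) = lf z x - lf z y.
Proof. by rewrite lformDr lformNr. Qed.

Lemma lform0l z : lf 0 z = 0.
Proof. by rewrite /lform !mul0mx mxE. Qed.

Lemma lform0r z : lf z 0 = 0.
Proof. by rewrite /lform trmx0 mulmx0 mxE. Qed.

Definition lformE :=
  (lformDl, lformDr, lformZl, lformZr, lformBl, lformBr, lformNl, lformNr,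
   lform0l, lform0r).

Lemma lformC x y : lf x y = lf y x.
Proof.
rewrite /lform.
have -> : x *m M *m y^T = (y *m M *m x^T)^T by rewrite !trmx_mul trmxK M_sym mulmxA.
by rewrite mxE.
Qed.

Lemma lform_mx_entry m n (A : 'M[R]_(m, 6)) (B : 'M[R]_(n, 6)) i j :
  (A *m M *m B^T) i j = lf (row i A) (row j B).
Proof.
by rewrite /lform -row_mul !mxE; apply: eq_bigr => l _; rewrite !mxE.
Qed.

Lemma lform_circle_perp (G : 'M[R]_(3, 6)) w y :
  (w <= G)%MS -> circle_perp M G y -> lf w y = 0.
Proof.
move=> /submxP[D ->]; rewrite /circle_perp /lform -!mulmxA (mulmxA G M) => ->.
by rewrite mulmx0 mxE.
Qed.

Lemma sub_perp_kermxP m (N : 'M[R]_(m, 6)) y :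
  (y <= kermx (M *m N^T))%MS <-> forall i, lf y (row i N) = 0.
Proof.
split=> [/sub_kermxP | yN]; last first.
  by apply/sub_kermxP/matrixP => i j; rewrite mulmxA lform_mx_entry row_id mxE.
by rewrite mulmxA => /matrixP yN i; have := yN 0 i; rewrite lform_mx_entry row_id mxE.
Qed.

Lemma perp_spaceP x y : (y <= perp_space M x)%MS <-> lf y x = 0.
Proof.
rewrite sub_perp_kermxP; split=> [/(_ ord0) | yx i]; by rewrite row_id.
Qed.

Lemma lform_lie_invl a x y :
  lf (lie_inv M a x) y = lf x y - 2 * lf x a / lf a a * lf a y.
Proof. by rewrite /lie_inv lformBl lformZl. Qed.

Section LieInversion.
Variable a : 'rV[R]_6.
Hypothesis a_nondeg : lf a a != 0.

Lemma lie_inv_isometry x y : lf (lie_inv M a x) (lie_inv M a y) = lf x y.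
Proof.
rewrite /lie_inv !lformE ?[lf a x]lformC ?[lf a y]lformC ?[lf y x]lformC.
by field.
Qed.

Lemma lie_inv_adj x y : lf (lie_inv M a x) y = lf x (lie_inv M a y).
Proof.
rewrite /lie_inv !lformE ?[lf a x]lformC ?[lf a y]lformC ?[lf y x]lformC.
by field.
Qed.

Lemma lform_lie_inv_axis x : lf (lie_inv M a x) a = - lf x a.
Proof. by rewrite lform_lie_invl; field. Qed.

Lemma lie_invK : involutive (lie_inv M a).
Proof.
move=> x; rewrite {1}/lie_inv lform_lie_inv_axis /lie_inv.
by apply/rowP => j; rewrite !mxE; field.
Qed.

Lemma lie_inv_eq0 x : (lie_inv M a x == 0) = (x == 0).
Proof.
have lie_inv0 : lie_inv M a 0 = 0 by rewrite /lie_inv lform0l mulr0 mul0r scale0r subr0.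
by apply/eqP/eqP => [x0 | ->]; rewrite // -[x]lie_invK x0.
Qed.

Lemma light_lie_inv x : light M x -> light M (lie_inv M a x).
Proof. by case=> x0 xx; split; rewrite ?lie_inv_eq0 ?lie_inv_isometry. Qed.

End LieInversion.

Lemma lie_inv_id a x : lf x a = 0 -> lie_inv M a x = x.
Proof. by rewrite /lie_inv => ->; rewrite mulr0 mul0r scale0r subr0. Qed.

Lemma lie_inv_submx m (A : 'M[R]_(m, 6)) a x :
  (x <= A)%MS -> (a <= A)%MS -> (lie_inv M a x <= A)%MS.
Proof. by move=> xA aA; rewrite addmx_sub // -scaleNr scalemx_sub. Qed.

Lemma circle_perp_lie_inv (G : 'M[R]_(3, 6)) a y :
  circle_perp M G a -> circle_perp M G y -> circle_perp M G (lie_inv M a y).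
Proof.
rewrite /circle_perp /lie_inv linearB linearZ /= mulmxBr -scalemxAr => -> ->.
by rewrite scaler0 subr0.
Qed.

Definition i1 : 'I_3 := @Ordinal 3 1 isT.
Definition i2 : 'I_3 := @Ordinal 3 2 isT.
Definition j1 : 'I_2 := @Ordinal 2 1 isT.

Definition mx3 (u v w : 'rV[R]_6) : 'M[R]_(3, 6) :=
  \matrix_(i < 3, j < 6)
    (if val i == 0%N then u 0 j else if val i == 1%N then v 0 j else w 0 j).
Definition mx2 (u v : 'rV[R]_6) : 'M[R]_(2, 6) :=
  \matrix_(i < 2, j < 6) (if val i == 0%N then u 0 j else v 0 j).
Definition rv3 (a b c : R) : 'rV[R]_3 :=
  \row_(i < 3) (if val i == 0%N then a else if val i == 1%N then b else c).
Definition rv2 (a b : R) : 'rV[R]_2 :=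
  \row_(i < 2) (if val i == 0%N then a else b).

Lemma mul_rv3 a b c u v w : rv3 a b c *m mx3 u v w = a *: u + b *: v + c *: w.
Proof. by apply/rowP => j; rewrite !mxE !big_ord_recl big_ord0 !mxE /= addr0 addrA. Qed.

Lemma mul_rv2 a b u v : rv2 a b *m mx2 u v = a *: u + b *: v.
Proof. by apply/rowP => j; rewrite !mxE !big_ord_recl big_ord0 !mxE /= addr0. Qed.

Lemma rv3_eta (r : 'rV[R]_3) : r = rv3 (r 0 ord0) (r 0 i1) (r 0 i2).
Proof.
apply/rowP => j; rewrite mxE.
by case: j => [[|[|[|//]]] Hj] /=; congr (r 0 _); exact: val_inj.
Qed.

Lemma rv2_eta (r : 'rV[R]_2) : r = rv2 (r 0 ord0) (r 0 j1).
Proof.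
apply/rowP => j; rewrite mxE.
by case: j => [[|[|//]] Hj] /=; congr (r 0 _); exact: val_inj.
Qed.

Lemma rv3_eq0 a b c : (rv3 a b c == 0) = [&& a == 0, b == 0 & c == 0].
Proof.
apply/eqP/and3P => [/rowP r0 | [/eqP-> /eqP-> /eqP->]].
  by split; [move: (r0 ord0) | move: (r0 i1) | move: (r0 i2)]; rewrite !mxE /= => ->.
by apply/matrixP => i j; rewrite !mxE; case: ifP => //; case: ifP.
Qed.

Lemma row_mx3 u v w i :
  row i (mx3 u v w) = if val i == 0%N then u else if val i == 1%N then v else w.
Proof. by apply/rowP => j; rewrite !mxE; case: (val i == 0%N); case: (val i == 1%N). Qed.

Lemma row_mx2 u v i : row i (mx2 u v) = if val i == 0%N then u else v.
Proof. by apply/rowP => j; rewrite !mxE; case: (val i == 0%N). Qed.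

Lemma row_free_mx3 u v w :
  (forall a b c, a *: u + b *: v + c *: w = 0 -> [/\ a = 0, b = 0 & c = 0]) ->
  row_free (mx3 u v w).
Proof.
move=> uvw_indep; apply: inj_row_free => r; rewrite [r]rv3_eta mul_rv3.
by move=> /uvw_indep[-> -> ->]; apply/eqP; rewrite rv3_eq0 !eqxx.
Qed.

Lemma row_free_mx2 u v :
  (forall a b, a *: u + b *: v = 0 -> a = 0 /\ b = 0) -> row_free (mx2 u v).
Proof.
move=> uv_indep; apply: inj_row_free => r; rewrite [r]rv2_eta mul_rv2.
move=> /uv_indep[-> ->]; apply/rowP => j; rewrite !mxE; by case: ifP.
Qed.

Lemma submx_mx3 u v w a b c x :
  x = a *: u + b *: v + c *: w -> (x <= mx3 u v w)%MS.
Proof. by rewrite -mul_rv3 => ->; apply: submxMl. Qed.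

Lemma mx2_submx m (A : 'M[R]_(m, 6)) u v :
  (u <= A)%MS -> (v <= A)%MS -> (mx2 u v <= A)%MS.
Proof. by move=> uA vA; apply/row_subP => i; rewrite row_mx2; case: ifP. Qed.

Lemma row_free_mx2_isotropic y h :
  y != 0 -> lf h y = 0 -> lf h h != 0 -> row_free (mx2 y h).
Proof.
move=> y0 hy hh; apply: row_free_mx2 => a b ab0.
have := congr1 (lf^~ h) ab0; rewrite /= !lformE lformC hy mulr0 add0r.
move=> /eqP; rewrite mulf_eq0 (negbTE hh) orbF => /eqP b0; split=> //.
by move: ab0 => /eqP; rewrite b0 scale0r addr0 scaler_eq0 (negbTE y0) orbF => /eqP.
Qed.

Lemma sig_diag_unit n k : sig_diag R n k \in unitmx.
Proof.
rewrite unitmxE det_diag unitfE; apply/prodf_neq0 => i _; rewrite mxE.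
by case: ifP => _; rewrite ?oppr_eq0 oner_neq0.
Qed.

Lemma lie_form_42_unit : lie_form_42 M -> M \in unitmx.
Proof.
case=> _ [P [_ PMP]]; have : P^T *m M *m P \in unitmx by rewrite PMP sig_diag_unit.
by rewrite !unitmx_mul => /andP[/andP[_ ->]].
Qed.

Section Nondegenerate.
Hypothesis M_unit : M \in unitmx.

Lemma rank_perp_kermx m (N : 'M[R]_(m, 6)) :
  \rank (kermx (M *m N^T)) = (6 - \rank N)%N.
Proof.
rewrite mxrank_ker -mxrank_tr trmx_mul trmxK M_sym mxrankMfree //.
by rewrite row_free_unit.
Qed.

Lemma submx_perp3P (G : 'M[R]_(3, 6)) u v w : row_free G ->
  circle_perp M G u -> circle_perp M G v -> circle_perp M G w ->
  row_free (mx3 u v w) ->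
  forall y, (y <= G)%MS <-> [/\ lf y u = 0, lf y v = 0 & lf y w = 0].
Proof.
move=> G_free Gu Gv Gw uvw_free y.
set K := kermx (M *m (mx3 u v w)^T).
have inK z : (z <= K)%MS <-> [/\ lf z u = 0, lf z v = 0 & lf z w = 0].
  rewrite sub_perp_kermxP; split=> [zK | [zu zv zw] i].
    by split; [have := zK ord0 | have := zK i1 | have := zK i2]; rewrite row_mx3.
  by rewrite row_mx3; case: ifP => _; [|case: ifP].
have GK : (G <= K)%MS.
  by apply/row_subP => i; apply/inK; split; apply: lform_circle_perp (row_sub i G) _.
have KG : (K <= G)%MS.
  by rewrite -(mxrank_leqif_sup GK).2 rank_perp_kermx (eqP uvw_free) (eqP G_free).
rewrite -inK; split=> [yG | yK]; [exact: submx_trans GK | exact: submx_trans KG].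
Qed.

(* Inside the 3-space G, {y}^perp is a hyperplane (some z in G is not
   orthogonal to y); it contains the independent vectors y and h. *)
Lemma capmx_perp_space (G : 'M[R]_(3, 6)) y h z : row_free G -> y != 0 ->
  (z <= G)%MS -> lf z y != 0 -> (y <= G)%MS -> (h <= G)%MS ->
  lf h y = 0 -> lf y y = 0 -> lf h h != 0 ->
  (G :&: perp_space M y == mx2 y h)%MS.
Proof.
move=> G_free y0 zG zy yG hG hy yy hh.
set P := perp_space M y.
have rankP : \rank P = 5%N by rewrite rank_perp_kermx rank_rV y0.
have yhP : (mx2 y h <= G :&: P)%MS.
  by rewrite sub_capmx mx2_submx // mx2_submx //; apply/perp_spaceP.
have rankGP : \rank (G + P)%MS = 6%N.
  have PGP := addsmxSr G P.
  have GP_P : (G + P <= P)%MS = false.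
    apply: contraNF zy => GP_P; apply/eqP/perp_spaceP.
    exact: submx_trans zG (submx_trans (addsmxSl G P) GP_P).
  have := (mxrank_leqif_sup PGP).2; rewrite GP_P rankP => /negbT rank_neq5.
  have := mxrankS PGP; rewrite rankP => rank_ge5.
  by apply/eqP; rewrite eqn_leq rank_leq_col ltn_neqAle rank_neq5 rank_ge5.
have rank_cap : \rank (G :&: P) = 2%N.
  have := mxrank_sum_cap G P; rewrite rankGP rankP (eqP G_free) => /eqP.
  by rewrite -[(3 + 5)%N]/(6 + 2)%N eqn_add2l => /eqP.
have rank_yh : \rank (mx2 y h) = 2%N by apply/eqP; apply: row_free_mx2_isotropic.
by rewrite yhP andbT -(mxrank_leqif_sup yhP).2 rank_yh rank_cap.
Qed.

Lemma lform_sig_basis (B : 'M[R]_(3, 6)) : B *m M *m B^T = sig_diag R 3 2 ->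
  forall r r' : 'rV[R]_3, lf (r *m B) (r' *m B) =
    r 0 ord0 * r' 0 ord0 + r 0 i1 * r' 0 i1 - r 0 i2 * r' 0 i2.
Proof.
move=> B_sig r r'.
have lift1 : lift ord0 (ord0 : 'I_2) = i1 by apply: val_inj.
have lift2 : lift ord0 (lift ord0 (ord0 : 'I_1)) = i2 by apply: val_inj.
have -> : lf (r *m B) (r' *m B) = (r *m (B *m M *m B^T) *m r'^T) 0 0.
  by rewrite /lform trmx_mul !mulmxA.
rewrite B_sig /sig_diag !mxE !big_ord_recl !big_ord0 !mxE /= !lift1 !lift2.
by rewrite !big_ord_recl !big_ord0 !mxE /= !lift1 !lift2 /=; ring.
Qed.

Variable p : 'rV[R]_6.

Lemma is_circle_sig (C : 'M[R]_(3, 6)) :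
  C *m M *m C^T = sig_diag R 3 2 -> C *m M *m p^T = 0 -> is_circle M p C.
Proof.
move=> C_sig Cp; split; last first.
  by split=> //; exists 1%:M; rewrite unitmx1 mul1mx trmx1 mulmx1.
have rank3 : \rank (C *m M *m C^T) = 3%N by rewrite C_sig mxrank_unit ?sig_diag_unit.
rewrite /row_free eqn_leq rank_leq_row /= -{1}rank3.
exact: leq_trans (mxrankM_maxl _ _) (mxrankM_maxl _ _).
Qed.

Lemma circle_sig_basis G : is_circle M p G ->
  exists B : 'M[R]_(3, 6), [/\ B *m M *m B^T = sig_diag R 3 2, (G <= B)%MS & (B <= G)%MS].
Proof.
case=> _ [_ [Q [Q_unit QG]]]; exists (Q *m G); split; last exact: submxMl.
  by move: QG; rewrite trmx_mul !mulmxA.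
by rewrite eqmxMfull // row_full_unit.
Qed.

Lemma circle_point_exists G : is_circle M p G -> exists x, circle_point M p G x.
Proof.
move=> G_circ; have [B [B_sig GB BG]] := circle_sig_basis G_circ.
set x := rv3 0 1 1 *m B.
have xG : (x <= G)%MS by apply: submx_trans (submxMl _ _) BG.
exists x; split=> //; split; last by case: G_circ => _ [Gp _]; apply: lform_circle_perp xG Gp.
split; last by rewrite lform_sig_basis // !mxE /=; ring.
apply/negP => /eqP x0; have := lform_sig_basis B_sig (rv3 0 1 1) (rv3 0 1 0).
rewrite -/x x0 lform0l !mxE /= => /eqP.
by rewrite !mul0r !mulr0 !mulr1 add0r subr0 eq_sym oner_eq0.
Qed.

Lemma circle_point_frame G x : is_circle M p G -> circle_point M p G x ->
  exists g z, [/\ (g <= G)%MS, lf g x = 0, lf g g = 1, (z <= G)%MS & lf z x != 0].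
Proof.
move=> G_circ [[[x0 xx] _] xG].
have [B [B_sig GB BG]] := circle_sig_basis G_circ.
have /submxP [w xw] : (x <= B)%MS by apply: submx_trans xG GB.
rewrite {x xG}xw [w]rv3_eta in x0 xx *.
move: (w 0 ord0) (w 0 i1) (w 0 i2) x0 xx => w0 w1 w2 x0.
rewrite lform_sig_basis // !mxE /= => xx.
have w2_neq0 : w2 != 0.
  apply: contraNneq x0 => w20; rewrite w20 in xx *.
  have [-> ->] : w0 = 0 /\ w1 = 0 by split; nra.
  have -> : rv3 0 0 0 = 0 by apply/eqP; rewrite rv3_eq0 !eqxx.
  by rewrite mul0mx.
exists (rv3 (- w1 / w2) (w0 / w2) 0 *m B), (rv3 0 0 1 *m B).
split; try by apply: submx_trans (submxMl _ _) BG.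
- by rewrite lform_sig_basis // !mxE /=; field.
- rewrite lform_sig_basis // !mxE /=.
  transitivity ((w0 * w0 + w1 * w1) / (w2 * w2)); first by field.
  have -> : w0 * w0 + w1 * w1 = w2 * w2 by lra.
  by rewrite divff // mulf_neq0.
- by rewrite lform_sig_basis // !mxE /= !mul0r add0r mul1r sub0r oppr_eq0.
Qed.

Lemma circle_contact G x g : is_circle M p G -> circle_point M p G x ->
  (g <= G)%MS -> lf g x = 0 -> lf g g != 0 ->
  (G :&: perp_space M x == mx2 x g)%MS.
Proof.
move=> G_circ x_pt gG gx gg; have [_ [z [_ _ _ zG zx]]] := circle_point_frame G_circ x_pt.
case: x_pt => [[[x0 xx] _] xG].
exact: capmx_perp_space (proj1 G_circ) x0 zG zx xG gG gx xx gg.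
Qed.

Lemma touch_at_frame G1 G2 x g : is_circle M p G1 -> is_circle M p G2 ->
  circle_point M p G1 x -> circle_point M p G2 x ->
  (g <= G1)%MS -> (g <= G2)%MS -> lf g x = 0 -> lf g g != 0 ->
  touch_at M p G1 G2 x.
Proof.
move=> G1_circ G2_circ x1 x2 g1 g2 gx gg; do 2!split=> //.
apply/eqmxP; apply: eqmx_trans (eqmxP (circle_contact G1_circ x1 g1 gx gg)) _.
exact/eqmx_sym/eqmxP/(circle_contact G2_circ x2 g2 gx gg).
Qed.

Lemma touch_at_trace G1 G2 x : circle_point M p G1 x ->
  (forall y, lf y x = 0 -> (y <= G1)%MS = (y <= G2)%MS) -> touch_at M p G1 G2 x.
Proof.
move=> x1 trace; have [[[x0 xx] xp] xG1] := x1.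
have x2 : circle_point M p G2 x by do 2?split=> //; rewrite -trace.
have capS (G G' : 'M[R]_(3, 6)) : (forall y, lf y x = 0 -> (y <= G)%MS = (y <= G')%MS) ->
    (G :&: perp_space M x <= G' :&: perp_space M x)%MS.
  move=> tr; apply/row_subP => i; have := row_sub i (G :&: perp_space M x)%MS.
  by rewrite !sub_capmx => /andP[yG /[dup] yP /perp_spaceP/tr <-]; rewrite yG.
by do 2!split=> //; apply/andP; split; apply: capS => // y /trace ->.
Qed.

Lemma circle_through x g a : lf x x = 0 -> lf g x = 0 -> lf g g = 1 ->
  lf x a != 0 -> lf x p = 0 -> lf g p = 0 -> lf a p = 0 ->
  exists C, [/\ is_circle M p C, (x <= C)%MS, (g <= C)%MS & (a <= C)%MS].
Proof.
move=> xx gx gg + xp gp ap.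
have xg : lf x g = 0 by rewrite lformC.
have [al xa] : exists al, lf x a = al by eexists.
have [be ga] : exists be, lf g a = be by eexists.
have [de aa] : exists de, lf a a = de by eexists.
have ax : lf a x = al by rewrite lformC.
have ag : lf a g = be by rewrite lformC.
rewrite xa => al0.
(* a' is isotropic with <a', x> = al, so x/al +- a'/2 have norms +-1, and
   g - (be/al) x is a unit vector orthogonal to x and a'. *)
pose a' := a - (de / (2 * al)) *: x.
pose C := mx3 (g - (be / al) *: x) (al^-1 *: x + 2^-1 *: a') (al^-1 *: x - 2^-1 *: a').
exists C; split.
- apply: is_circle_sig.
    apply/matrixP => i j; rewrite lform_mx_entry !row_mx3 /sig_diag !mxE.
    case: i => [[|[|[|//]]] ?]; case: j => [[|[|[|//]]] ?] /=;
      by rewrite /a' !lformE ?xx ?gx ?xg ?gg ?xa ?ax ?ga ?ag ?aa; field.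
  apply/matrixP => i j; rewrite lform_mx_entry row_id row_mx3 mxE.
  by case: i => [[|[|[|//]]] ?] /=; rewrite /a' !lformE ?xp ?gp ?ap; ring.
- by apply: (@submx_mx3 _ _ _ 0 (al / 2) (al / 2)); apply/rowP => j; rewrite !mxE; field.
- by apply: (@submx_mx3 _ _ _ 1 (be / 2) (be / 2)); apply/rowP => j; rewrite !mxE; field.
apply: (@submx_mx3 _ _ _ 0 (1 + de / 4) (de / 4 - 1)).
by apply/rowP => j; rewrite !mxE; field.
Qed.

Lemma lie_inv_circle_point a G G' x : lf a a != 0 -> lf a p = 0 ->
  (forall y, (y <= G)%MS -> (lie_inv M a y <= G')%MS) ->
  circle_point M p G x -> circle_point M p G' (lie_inv M a x).
Proof.
move=> aa ap GG' [[x_light xp] xG]; split; last exact: GG'.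
split; first exact: light_lie_inv.
by rewrite lform_lie_invl ap mulr0 subr0.
Qed.

Lemma orth_intersect_lform s k :
  orth_intersect M p s k -> lf s k = - (lf k p * lf s p).
Proof. by rewrite /orth_intersect !lformE [lf s p]lformC => /eqP; rewrite addr_eq0 => /eqP. Qed.

Lemma orth_intersect_lie_inv_p s k : lf p p = -1 ->
  orth_intersect M p s k -> orth_intersect M p (lie_inv M p s) k.
Proof.
move=> pp; rewrite /orth_intersect lform_lie_invl => ->.
by rewrite !lformE pp [lf p k]lformC mulrN1 subrr mulr0 subr0.
Qed.

Section Ribaucour.
Hypothesis pp : lf p p = -1.

Lemma row_free_orth_spheres k s : lf k k = 0 -> lf s s = 0 ->
  lf k p != 0 -> lf s p != 0 -> lf s k = - (lf k p * lf s p) ->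
  row_free (mx3 p k s).
Proof.
move=> kk ss kp sp sk; apply: row_free_mx3 => al be ga pks0.
move: (congr1 (lf^~ p) pks0) (congr1 (lf^~ k) pks0) (congr1 (lf^~ s) pks0).
rewrite /= !lformE pp kk ss sk [lf p k]lformC [lf p s]lformC [lf k s]lformC sk.
move=> ep ek es.
have /eqP : (al - ga * lf s p) * lf k p = 0 by rewrite -ek; ring.
rewrite mulf_eq0 (negbTE kp) orbF subr_eq0 => /eqP al_ga.
have /eqP : (al - be * lf k p) * lf s p = 0 by rewrite -es; ring.
rewrite mulf_eq0 (negbTE sp) orbF subr_eq0 => /eqP al_be.
have al0 : al = 0 by rewrite -[RHS]ep -al_be -al_ga; ring.
split=> //.
  by apply/eqP; move: al_be; rewrite al0 => /esym/eqP; rewrite mulf_eq0 (negbTE kp) orbF.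
by apply/eqP; move: al_ga; rewrite al0 => /esym/eqP; rewrite mulf_eq0 (negbTE sp) orbF.
Qed.

Lemma circle_spheresP G k s : is_circle M p G ->
  light M k -> lf k p != 0 -> circle_perp M G k ->
  light M s -> lf s p != 0 -> circle_perp M G s -> orth_intersect M p s k ->
  forall y, (y <= G)%MS <-> [/\ lf y p = 0, lf y k = 0 & lf y s = 0].
Proof.
move=> [G_free [Gp _]] [_ kk] kp Gk [_ ss] sp Gs sk.
apply: submx_perp3P => //.
exact: row_free_orth_spheres (orth_intersect_lform sk).
Qed.

Variables (G1 G2 : 'M[R]_(3, 6)) (k s1 s2 : 'rV[R]_6).
Hypotheses (G1_circle : is_circle M p G1) (G2_circle : is_circle M p G2).
Hypotheses (k_light : light M k) (kp : lf k p != 0).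
Hypotheses (G1k : circle_perp M G1 k) (G2k : circle_perp M G2 k).
Hypothesis not_tangent : ~ circles_tangent M p G1 G2.
Hypotheses (s1_light : light M s1) (G1s1 : circle_perp M G1 s1).
Hypotheses (s1p : lf s1 p != 0) (s1k : orth_intersect M p s1 k).
Hypotheses (s2_light : light M s2) (G2s2 : circle_perp M G2 s2).
Hypotheses (s2p : lf s2 p != 0) (s2k : orth_intersect M p s2 k).

Local Notation a := (lf s2 p *: s1 - lf s1 p *: s2).

Lemma G1P y : (y <= G1)%MS <-> [/\ lf y p = 0, lf y k = 0 & lf y s1 = 0].
Proof. exact: circle_spheresP. Qed.

Lemma G2P y : (y <= G2)%MS <-> [/\ lf y p = 0, lf y k = 0 & lf y s2 = 0].
Proof. exact: circle_spheresP. Qed.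

Lemma lform_axis y : lf y a = lf s2 p * lf y s1 - lf s1 p * lf y s2.
Proof. by rewrite !lformE. Qed.

Lemma axis_p : lf a p = 0.
Proof. by rewrite lformC lform_axis [lf p s1]lformC [lf p s2]lformC; ring. Qed.

Lemma axis_k : lf a k = 0.
Proof.
rewrite lformC lform_axis [lf k s1]lformC [lf k s2]lformC.
by rewrite (orth_intersect_lform s1k) (orth_intersect_lform s2k); ring.
Qed.

Lemma axis_s1 : lf a s1 = - (lf s1 p * lf s1 s2).
Proof. by rewrite lformC lform_axis (proj2 s1_light) [lf s1 s2]lformC; ring. Qed.

Lemma axis_s2 : lf a s2 = lf s2 p * lf s1 s2.
Proof. by rewrite lformC lform_axis (proj2 s2_light) [lf s2 s1]lformC; ring. Qed.

Lemma axis_norm : lf a a = -2 * lf s1 p * lf s2 p * lf s1 s2.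
Proof. by rewrite lform_axis axis_s1 axis_s2; ring. Qed.

Lemma trace_axis y : lf y a = 0 -> (y <= G1)%MS = (y <= G2)%MS.
Proof.
rewrite lform_axis => /eqP ya; apply/idP/idP => [/G1P | /G2P] [yp yk ys]; [apply/G2P | apply/G1P].
  by split=> //; move: ya; rewrite ys mulr0 sub0r oppr_eq0 mulf_eq0 (negbTE s1p) => /eqP.
by split=> //; move: ya; rewrite ys mulr0 subr0 mulf_eq0 (negbTE s2p) => /eqP.
Qed.

(* If <s1, s2> = 0 then a is isotropic and lies on G1, hence is a point of
   both circles (unless a = 0) with the same contact element. *)
Lemma s1s2_neq0 : lf s1 s2 != 0.
Proof.
apply/negP => /eqP s1s2; apply: not_tangent.
have [x [x1 xa]] : exists x, circle_point M p G1 x /\ forall y, lf y x = 0 -> lf y a = 0.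
  have [a0 | a_neq0] := eqVneq a 0.
    have [x x1] := circle_point_exists G1_circle.
    by exists x; split=> // y _; rewrite a0 lform0r.
  exists a; split=> //; split; first by split; [split; rewrite // axis_norm s1s2 mulr0 | exact: axis_p].
  by apply/G1P; rewrite axis_p axis_k axis_s1 s1s2 mulr0 oppr0.
by exists x; apply: touch_at_trace x1 _ => y /xa /trace_axis.
Qed.

Lemma axis_nondeg : lf a a != 0.
Proof. by rewrite axis_norm !mulf_neq0 ?s1s2_neq0 // oppr_eq0 pnatr_eq0. Qed.

Lemma lie_inv_axis_s1 : lie_inv M a s1 = (lf s1 p / lf s2 p) *: s2.
Proof.
have s1s2 := s1s2_neq0.
rewrite /lie_inv [lf s1 _]lformC axis_s1 axis_norm; apply/rowP => j; rewrite !mxE; field.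
by rewrite s1s2 s1p s2p.
Qed.

Lemma lie_inv_axis_s2 : lie_inv M a s2 = (lf s2 p / lf s1 p) *: s1.
Proof.
have s1s2 := s1s2_neq0.
rewrite /lie_inv [lf s2 _]lformC axis_s2 axis_norm; apply/rowP => j; rewrite !mxE; field.
by rewrite s1s2 s1p s2p.
Qed.

Lemma lie_inv_axis_p : lie_inv M a p = p.
Proof. by apply: lie_inv_id; rewrite lformC axis_p. Qed.

Lemma lie_inv_axis_k : lie_inv M a k = k.
Proof. by apply: lie_inv_id; rewrite lformC axis_k. Qed.

Lemma lie_inv_axis12 y : (y <= G1)%MS -> (lie_inv M a y <= G2)%MS.
Proof.
move=> /G1P[yp yk ys1]; apply/G2P.
rewrite !lie_inv_adj ?axis_nondeg // lie_inv_axis_p lie_inv_axis_k lie_inv_axis_s2.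
by rewrite lformZr ys1 mulr0.
Qed.

Lemma lie_inv_axis21 y : (y <= G2)%MS -> (lie_inv M a y <= G1)%MS.
Proof.
move=> /G2P[yp yk ys2]; apply/G1P.
rewrite !lie_inv_adj ?axis_nondeg // lie_inv_axis_p lie_inv_axis_k lie_inv_axis_s1.
by rewrite lformZr ys2 mulr0.
Qed.

Lemma ribaucour_tangent_circle x :
  circle_point M p G1 x -> ~ circle_point M p G2 x ->
  exists C, [/\ is_circle M p C, touch_at M p C G1 x & touch_at M p C G2 (lie_inv M a x)].
Proof.
move=> x1 x_not2; have [[[x0 xx] xp] xG1] := x1.
have aa := axis_nondeg.
have sx2 := lie_inv_circle_point aa axis_p lie_inv_axis12 x1.
have xa : lf x a != 0.
  by apply: contra_not_neq x_not2 => xa; rewrite -(lie_inv_id xa).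
have [g [_ [gG1 gx gg _ _]]] := circle_point_frame G1_circle x1.
have gp : lf g p = 0 by apply: lform_circle_perp gG1 (proj1 (proj2 G1_circle)).
have [C [C_circ xC gC aC]] := circle_through xx gx gg xa xp gp axis_p.
have gg0 : lf g g != 0 by rewrite gg oner_neq0.
exists C; split=> //.
  by apply: touch_at_frame gC gG1 gx gg0 => //; split.
apply: (touch_at_frame (g := lie_inv M a g)) => //.
- by case: sx2 => sx_pt _; split=> //; apply: lie_inv_submx.
- exact: lie_inv_submx.
- exact: lie_inv_axis12.
- by rewrite lie_inv_isometry.
- by rewrite lie_inv_isometry.
Qed.

Lemma ribaucour_inversion_axis : ribaucour_inversion M p G1 G2 k a.
Proof.
have aa := axis_nondeg.
split; first by split; [exact: aa | exact: axis_p].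
split; first by exists 1; rewrite scale1r lie_inv_axis_k.
split; first by move=> x; apply: lie_inv_circle_point aa axis_p lie_inv_axis12.
split; first by move=> x x' _ _; apply: (can_inj (lie_invK aa)).
split=> [y y2 | x x1 x_not2].
  exists (lie_inv M a y); split; last exact: lie_invK.
  exact: lie_inv_circle_point aa axis_p lie_inv_axis21 y2.
by have [C [? ? ?]] := ribaucour_tangent_circle x1 x_not2; exists C.
Qed.

End Ribaucour.
End Nondegenerate.
End LieForm.

Theorem mainTheorem6 (R : realType) (M : 'M[R]_6) (p k s1 s2 : 'rV[R]_6)
    (G1 G2 : 'M[R]_(3,6)) :
  lie_form_42 M -> lform M p p = -1 ->
  is_circle M p G1 -> is_circle M p G2 ->
  light M k -> lform M k p != 0 ->
  circle_perp M G1 k -> circle_perp M G2 k ->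
  ~ circles_tangent M p G1 G2 ->
  light M s1 -> circle_perp M G1 s1 -> lform M s1 p != 0 ->
  orth_intersect M p s1 k ->
  light M s2 -> circle_perp M G2 s2 -> lform M s2 p != 0 ->
  orth_intersect M p s2 k ->
  let a := lform M s2 p *: s1 - lform M s1 p *: s2 in
  let s2' := lie_inv M p s2 in
  let a' := lform M s2' p *: s1 - lform M s1 p *: s2' in
  ribaucour_inversion M p G1 G2 k a /\ ribaucour_inversion M p G1 G2 k a'.
Proof.
move=> M42 pp G1c G2c kL kp G1k G2k nt s1L G1s1 s1p s1k s2L G2s2 s2p s2k a s2' a'.
have [M_sym _] := M42.
have M_unit := lie_form_42_unit M42.
have pp_neq0 : lform M p p != 0 by rewrite pp oppr_eq0 oner_neq0.
have s2'L : light M s2' by apply: light_lie_inv.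
have G2s2' : circle_perp M G2 s2' by apply: circle_perp_lie_inv => //; case: G2c => _ [].
have s2'p : lform M s2' p != 0 by rewrite lform_lie_inv_axis // oppr_eq0.
have s2'k : orth_intersect M p s2' k by apply: orth_intersect_lie_inv_p.
by split; apply: ribaucour_inversion_axis.
Qed.
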